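(* Let $G$ be the central product of normal subgroups $H,K$ ($G=HK$, $[H,K]=1$) with $H'\cap K'=1$, and let $D$ be a divisible abelian group with trivial action. Then the homomorphism $$\theta'=(\operatorname{res}^G_H,\operatorname{res}^G_K,\nu):\operatorname{H}^2(G,D)\to\operatorname{H}^2(H,D)\oplus\operatorname{H}^2(K,D)\oplus\operatorname{Hom}(H\otimes K,D)$$ is injective.
   Context: $X\otimes Y$ denotes the abelian tensor product $X/X'\otimes_{\mathbb{Z}}Y/Y'$. For $\xi\in\operatorname{H}^2(G,D)$ represented by a 2-cocycle $f$, $\nu(\xi)(hH'\otimes kK')=f(h,k)-f(k,h)$ for $h\in H$, $k\in K$. *)

(* Groups are possibly infinite: we use the (non-finite)
   [groupType] structure of mathcomp/boot/monoid.v. *)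
From HB Require Import structures.
From mathcomp Require Import all_boot all_order all_algebra.
Set Implicit Arguments. Unset Strict Implicit. Unset Printing Implicit Defensive.
Import GRing.Theory.


Inductive gen_subgroup (G : groupType) (S : G -> Prop) : G -> Prop :=
  | gen_in x : S x -> gen_subgroup S x
  | gen_one : gen_subgroup S (@monoid.one G)
  | gen_mul x y : gen_subgroup S x -> gen_subgroup S y ->
                  gen_subgroup S (monoid.mul x y)
  | gen_inv x : gen_subgroup S x -> gen_subgroup S (monoid.inv x).

Definition derived (G : groupType) (H : {pred G}) : G -> Prop :=
  gen_subgroup (fun z => exists x y, x \in H /\ y \in H /\ z = monoid.commg x y).

Definition is_subgroup (G : groupType) (H : {pred G}) : Prop :=
  [/\ @monoid.one G \in H,
      forall x y, x \in H -> y \in H -> monoid.mul x y \in H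
    & forall x, x \in H -> monoid.inv x \in H].

Definition is_normal (G : groupType) (H : {pred G}) : Prop :=
  is_subgroup H /\ forall x g, x \in H -> monoid.conjg x g \in H.

Definition divisible (D : zmodType) : Prop :=
  forall (x : D) (n : nat), (0 < n)%N -> exists y : D, (y *+ n)%R = x.

Definition cocycle_on (G : groupType) (S : {pred G}) (D : zmodType)
    (f : G -> G -> D) : Prop :=
  forall x y z, x \in S -> y \in S -> z \in S ->
    (f y z - f (monoid.mul x y) z + f x (monoid.mul y z) - f x y = 0)%R.

(* f1 and f2 define the same class in H^2(S, D) (trivial action), i.e. they
   differ on S x S by a 2-coboundary. *)
Definition cohomologous_on (G : groupType) (S : {pred G}) (D : zmodType)
    (f1 f2 : G -> G -> D) : Prop :=
  exists c : G -> D, forall x y, x \in S -> y \in S ->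
    (f1 x y - f2 x y = c y - c (monoid.mul x y) + c x)%R.

(* The value nu(f)(hH' (x) kK') = f(h,k) - f(k,h). *)
Definition nu (G : groupType) (D : zmodType) (f : G -> G -> D) (h k : G) : D :=
  (f h k - f k h)%R.

From HB Require Import structures.
From mathcomp Require Import all_boot all_order all_algebra.
From mathcomp Require Import boolp classical_sets ssrAC.
Import GRing.Theory monoid.
Set Implicit Arguments. Unset Strict Implicit. Unset Printing Implicit Defensive.
Local Open Scope classical_set_scope.
(* With group_scope opened last, [*], [^-1] and [1] are group operations
   while [+], [-] and [0] refer to D. *)
Local Open Scope ring_scope.
Local Open Scope group_scope.

(* Let f be the difference of the two cocycles and Z := H :&: K, a central
   subgroup of G. On H and K, f is the coboundary of a and of b, so a - b is a
   homomorphism on Z. Since H' and K' meet trivially and D is divisible, it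
   splits as psi + (a - b - psi) where psi kills Z :&: H' and a - b - psi kills
   Z :&: K'; by Zorn these extend to homomorphisms al of H and be of K.
   Then a - al and b + be agree on Z and glue to a function e on G = HK, and
   f - de vanishes on H x H and K x K and is symmetric on H x K (this is where
   nu is used). Such a cocycle is the coboundary of hk |-> - f(h, k). *)

Section Subgroup.
Variables (G : groupType) (H : {pred G}).
Hypothesis subH : is_subgroup H.

Lemma subgroup1 : 1 \in H.
Proof. by case: subH. Qed.

Lemma subgroupM x y : x \in H -> y \in H -> x * y \in H.
Proof. by case: subH => _ + _; apply. Qed.

Lemma subgroupV x : x \in H -> x^-1 \in H.
Proof. by case: subH => _ _; apply. Qed.

Lemma subgroupJ x g : x \in H -> g \in H -> x ^ g \in H.
Proof. by move=> hx hg; rewrite conjgE !subgroupM ?subgroupV. Qed.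

Lemma subgroupX x n : x \in H -> x ^+ n \in H.
Proof.
by move=> hx; elim: n => [|n IH]; rewrite ?expg0 ?subgroup1 // expgS subgroupM.
Qed.

Lemma subgroup_derived x : derived H x -> x \in H.
Proof.
elim=> [_ [a [b [ha [hb ->]]]]| |u v _ hu _ hv|u _ hu].
- by rewrite commgEl subgroupM ?subgroupV ?subgroupJ.
- exact: subgroup1.
- exact: subgroupM.
- exact: subgroupV.
Qed.

Lemma derivedR x y : x \in H -> y \in H -> derived H [~ x, y].
Proof. by move=> hx hy; apply: gen_in; exists x, y. Qed.

Lemma derivedJ x g : derived H x -> g \in H -> derived H (x ^ g).
Proof.
move=> dx hg; elim: dx => [_ [a [b [ha [hb ->]]]]| |u v _ hu _ hv|u _ hu].
- by rewrite conjRg; apply: derivedR; apply: subgroupJ.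
- by rewrite conj1g; apply: gen_one.
- by rewrite conjMg; apply: gen_mul.
- by rewrite conjVg; apply: gen_inv.
Qed.

Lemma derived_abelian x :
  (forall a b, a \in H -> b \in H -> commute a b) -> derived H x -> x = 1.
Proof.
move=> cH; elim=> [_ [a [b [ha [hb ->]]]]| |u v _ -> _ ->|u _ ->].
- by apply/eqP/commgP; apply: cH.
- by [].
- by rewrite mulg1.
- by rewrite invg1.
Qed.

End Subgroup.

Lemma subgroupI (G : groupType) (H K : {pred G}) :
  is_subgroup H -> is_subgroup K -> is_subgroup [predI H & K].
Proof.
move=> subH subK; split=> [|x y|x]; rewrite !inE.
- by rewrite !subgroup1.
- by case/andP=> hx kx /andP[hy ky]; rewrite !subgroupM.
- by case/andP=> hx kx; rewrite !subgroupV.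
Qed.

Section Cobound.
Variables (G : groupType) (D : zmodType).
Implicit Types (S : {pred G}) (c : G -> D).

Definition additive_on S c := forall x y, x \in S -> y \in S -> c (x * y) = c x + c y.

Definition cobound c (x y : G) : D := c y - c (x * y) + c x.

Lemma additive_on1 S c : 1 \in S -> additive_on S c -> c 1 = 0.
Proof.
by move=> S1 cM; apply: (addrI (c 1)); rewrite addr0 -cM ?mulg1.
Qed.

Lemma additive_onV S c x : is_subgroup S -> additive_on S c -> x \in S ->
  c x^-1 = - c x.
Proof.
move=> subS cM xS; apply/eqP; rewrite -addr_eq0 addrC -cM ?subgroupV //.
by rewrite mulgV (additive_on1 (subgroup1 subS) cM).
Qed.

Lemma additive_onB S (c1 c2 : G -> D) :
  additive_on S c1 -> additive_on S c2 -> additive_on S (c1 \- c2).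
Proof. by move=> c1M c2M x y xS yS; rewrite /= c1M ?c2M // opprD addrACA. Qed.

Lemma cocycle_cobound c : cocycle_on predT (cobound c).
Proof.
move=> x y z _ _ _; rewrite /cobound mulgA.
rewrite !opprD !opprK !addrA.
by rewrite (ACl ((1*4)*(7*2)*(3*10)*(5*8)*(11*6)*(9*12))) /= !subrr !addr0.
Qed.

Lemma cobound_additive S c x y : additive_on S c -> x \in S -> y \in S ->
  cobound c x y = 0.
Proof.
by move=> cM xS yS; rewrite /cobound cM // opprD addrA addrAC subrr add0r addNr.
Qed.

Lemma coboundD (c1 c2 : G -> D) x y :
  cobound (c1 \+ c2) x y = cobound c1 x y + cobound c2 x y.
Proof. by rewrite /cobound /= !opprD !addrA [LHS](ACl (1*3*5*2*4*6)). Qed.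

Lemma coboundB (c1 c2 : G -> D) x y :
  cobound (c1 \- c2) x y = cobound c1 x y - cobound c2 x y.
Proof. by rewrite /cobound /= !opprD !opprK !addrA [LHS](ACl (1*3*5*2*4*6)). Qed.

Lemma eq_in_cobound S (c1 c2 : G -> D) x y : is_subgroup S -> {in S, c1 =1 c2} ->
  x \in S -> y \in S -> cobound c1 x y = cobound c2 x y.
Proof. by move=> subS e12 xS yS; rewrite /cobound !e12 ?subgroupM. Qed.

Lemma cobound_commute c x y : commute x y -> cobound c x y = cobound c y x.
Proof. by move=> cxy; rewrite /cobound cxy addrAC [c y + _]addrC addrAC. Qed.

Lemma cocycleB S (f1 f2 : G -> G -> D) : cocycle_on S f1 -> cocycle_on S f2 ->
  cocycle_on S (fun x y => f1 x y - f2 x y).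
Proof.
move=> f1c f2c x y z xS yS zS.
rewrite -[RHS](subrr 0) -{1}(f1c x y z xS yS zS) -(f2c x y z xS yS zS).
by rewrite !opprD !opprK !addrA [LHS](ACl (1*3*5*7*2*4*6*8)).
Qed.

Lemma additive_on_cobound_eq S (c1 c2 : G -> D) :
  {in S &, forall x y, cobound c1 x y = cobound c2 x y} -> additive_on S (c1 \- c2).
Proof.
move=> e12 x y xS yS; apply/eqP; rewrite /= -subr_eq0.
move/eqP: (e12 x y xS yS); rewrite -subr_eq0 -oppr_eq0 /cobound.
by rewrite !opprD !opprK !addrA [X in X == 0 -> _](ACl (2*5*3*6*1*4)).
Qed.

End Cobound.

Definition partial_hom (G : groupType) (D : zmodType) (H : {pred G})
    (W : set (G * D)) :=
  [/\ W (1, 0), (forall g d1 d2, W (g, d1) -> W (g, d2) -> d1 = d2),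
      (forall g1 g2 d1 d2, W (g1, d1) -> W (g2, d2) -> W (g1 * g2, d1 + d2)),
      (forall g d, W (g, d) -> W (g^-1, - d))
    & (forall g d, W (g, d) -> g \in H)].

Section ExtendToElement.
Variables (G : groupType) (D : zmodType) (H : {pred G}) (W : set (G * D)).
Hypotheses (subH : is_subgroup H) (divD : divisible D) (homW : partial_hom H W).
Hypothesis derivedW : forall d, derived H d -> W (d, 0).
Variable x : G.
Hypothesis xH : x \in H.

Lemma partial_homJ u d g : W (u, d) -> g \in H -> W (u ^ g, d).
Proof.
case: homW => _ _ Wmul _ Wdom wu hg.
have -> : u ^ g = u * [~ u, g] by rewrite commgEl mulVKg.
rewrite -[d]addr0; apply: Wmul => //; apply/derivedW/derivedR => //.
exact: Wdom wu.
Qed.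

Lemma partial_homX u d n : W (u, d) -> W (u ^+ n, d *+ n).
Proof.
case: homW => W1 _ Wmul _ _ wu; elim: n => [|n IH]; first by rewrite expg0 mulr0n.
by rewrite expgS mulrS; apply: Wmul.
Qed.

(* If x ^+ m, with m > 0 minimal, lies in the domain of W, then W is
   determined on the powers of x by its value at x ^+ m, and y is an m-th root
   of that value (D is divisible); otherwise y := 0 will do. *)
Lemma partial_hom_powers : exists y : D, forall n e, W (x ^+ n, e) -> e = y *+ n.
Proof.
case: homW => W1 Wfun Wmul Winv _.
case: (pselect (exists m, (0 < m)%N /\ exists e, W (x ^+ m, e))) => [tors|ntors].
- pose P m := `[< (0 < m)%N /\ exists e, W (x ^+ m, e) >].
  have exP : exists m, P m by case: tors => m hm; exists m; apply/asboolP.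
  case: (ex_minnP exP) => m /asboolP [m0 [em hem]] mmin.
  case: (divD em m0) => y hy; exists y => n e hn.
  have wq := partial_homX (n %/ m) hem.
  have wr : W (x ^+ (n %% m), - (em *+ (n %/ m)) + e).
    have -> : x ^+ (n %% m) = ((x ^+ m) ^+ (n %/ m))^-1 * x ^+ n.
      by rewrite {3}(divn_eq n m) expgnDr mulnC expgnA mulKg.
    exact: Wmul (Winv _ _ wq) hn.
  have r0 : (n %% m = 0)%N.
    apply/eqP; rewrite eqn0Ngt; apply/negP => rpos.
    have : (m <= n %% m)%N.
      by apply/mmin/asboolP; split; last exists (- (em *+ (n %/ m)) + e).
    by rewrite leqNgt ltn_pmod.
  move: wr; rewrite r0 expg0 => /Wfun /(_ W1) /eqP.
  rewrite addrC subr_eq0 => /eqP ->.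
  by rewrite {2}(divn_eq n m) r0 addn0 mulnC mulrnA hy.
- exists 0 => -[|n] e hn; rewrite mul0rn.
    by move: hn; rewrite expg0 => /Wfun; apply.
  by case: ntors; exists n.+1; split => //; exists e.
Qed.

(* [xint a b] stands for x ^ (a - b), with a and b natural numbers. *)
Let xint a b := x ^+ a * (x ^+ b)^-1.

Let xintM a b a' b' : xint a b * xint a' b' = xint (a + a')%N (b + b')%N.
Proof.
rewrite /xint mulgA -(mulgA (x ^+ a)).
have cx : commute (x ^+ b)^-1 (x ^+ a').
  by apply/commute_sym/commuteV/commuteX2/commute_refl.
by rewrite cx mulgA -expgnDr -mulgA -invgM -expgnDr (addnC b').
Qed.

Let xintV a b : (xint a b)^-1 = xint b a.
Proof. by rewrite /xint invgM invgK. Qed.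

Let xint_in a b : xint a b \in H.
Proof. by rewrite subgroupM ?subgroupV ?subgroupX. Qed.

Let xint0 : xint 0 0 = 1.
Proof. by rewrite /xint expg0 invg1 mulg1. Qed.

Lemma partial_hom_extend_to : exists W' : set (G * D),
  [/\ partial_hom H W', W `<=` W' & exists e, W' (x, e)].
Proof.
have [y hy] := partial_hom_powers.
have [W1 Wfun Wmul Winv Wdom] := homW.
have Wxint a b e : W (xint a b, e) -> e = y *+ a - y *+ b.
  case: (leqP b a) => ab.
    by rewrite /xint -expgnFr // => /hy ->; rewrite mulrnBr.
  rewrite -xintV /xint -expgnFr ?(ltnW ab) // => /Winv.
  by rewrite invgK => /hy /(congr1 -%R); rewrite opprK mulrnBr ?(ltnW ab) // opprB.
(* W' extends W by x |-> y; it is closed under products because W is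
   invariant under conjugation by H (partial_homJ). *)
pose W' p := exists u d a b, W (u, d) /\ p = (u * xint a b, d + y *+ a - y *+ b).
exists W'; split.
- split.
  + by exists 1, 0, 0%N, 0%N; rewrite xint0 mulg1 mulr0n addr0 subr0.
  + move=> g d1 d2 [u [d [a [b [wu [-> ->]]]]]] [u' [d' [a' [b' [wu' []]]]]] eu ->.
    have d_diff : - d' + d = y *+ (a' + b) - y *+ (b' + a).
      apply: Wxint; have -> : xint (a' + b) (b' + a) = u'^-1 * u.
        by rewrite (canRL (mulgK _) eu) -mulgA mulKg xintV xintM.
      exact: Wmul (Winv _ _ wu') wu.
    rewrite -[d](addNKr d') d_diff !mulrnDr !opprD !addrA.
    by rewrite [LHS](ACl ((1*2*4)*(3*7)*(5*6))) /= subrr addNr !addr0.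
  + move=> g1 g2 e1 e2 [u1 [d1 [a1 [b1 [wu1 [-> ->]]]]]].
    move=> [u2 [d2 [a2 [b2 [wu2 [-> ->]]]]]].
    exists (u1 * u2 ^ (xint a1 b1)^-1), (d1 + d2), (a1 + a2)%N, (b1 + b2)%N; split.
      by apply: Wmul => //; apply: partial_homJ; rewrite ?subgroupV.
    congr (_, _).
      rewrite -xintM; move: (xint a1 b1) (xint a2 b2) => p1 p2.
      by rewrite conjgE invgK !mulgA mulgVK.
    by rewrite !mulrnDr !opprD !addrA [RHS](ACl (1*3*5*2*4*6)).
  + move=> g e [u [d [a [b [wu [-> ->]]]]]].
    exists ((u^-1) ^ (xint a b)), (- d), b, a; split.
      by apply: partial_homJ; [apply: Winv|].
    congr (_, _).
      by rewrite -(xintV a b) conjgE invgM mulgA mulgK.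
    by rewrite !opprD !opprK addrAC.
  + move=> g e [u [d [a [b [wu [-> _]]]]]].
    by rewrite subgroupM ?xint_in ?(Wdom _ _ wu).
- by move=> [u d] wu; exists u, d, 0%N, 0%N; rewrite xint0 mulg1 mulr0n addr0 subr0.
- exists (0 + y *+ 1 - y *+ 0), 1, 0, 1%N, 0%N.
  by rewrite /xint expg1 expg0 invg1 mulg1 mul1g.
Qed.

End ExtendToElement.

Section ExtendToSubgroup.
Variables (G : groupType) (D : zmodType) (H : {pred G}) (W0 : set (G * D)).
Hypotheses (subH : is_subgroup H) (divD : divisible D) (homW0 : partial_hom H W0).
Hypothesis W0_derived : forall d e, derived H d -> W0 (d, e) -> e = 0.

Let W0D : set (G * D) :=
  fun p => exists s e d, [/\ W0 (s, e), derived H d & p = (s * d, e)].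

Let partial_hom_W0D : partial_hom H W0D.
Proof.
have [W01 Wfun Wmul Winv Wdom] := homW0; split.
- by exists 1, 0, 1; split => //; [apply: gen_one | rewrite mulg1].
- move=> g e1 e2 [s [e [d [ws hd [-> ->]]]]] [s' [e' [d' [ws' hd' [es ->]]]]].
  have ds : s'^-1 * s = d' * d^-1.
    by rewrite (canRL (mulgK _) es) -mulgA mulKg.
  have : derived H (s'^-1 * s) by rewrite ds; apply: gen_mul hd' (gen_inv hd).
  move/W0_derived/(_ (Wmul _ _ _ _ (Winv _ _ ws') ws))/eqP.
  by rewrite addrC subr_eq0 => /eqP.
- move=> g1 g2 e1 e2 [s [e [d [ws hd [-> ->]]]]] [s' [e' [d' [ws' hd' [-> ->]]]]].
  exists (s * s'), (e + e'), (d ^ s' * d'); split; first exact: Wmul.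
    by apply: gen_mul => //; apply: (derivedJ subH) => //; exact: Wdom ws'.
  by rewrite conjgE !mulgA mulgK.
- move=> g e1 [s [e [d [ws hd [-> ->]]]]].
  exists s^-1, (- e), (d^-1 ^ s^-1); split; first exact: Winv.
    by apply: (derivedJ subH); [apply: gen_inv | rewrite subgroupV ?(Wdom _ _ ws)].
  by rewrite conjgE invgK mulKg invgM.
- move=> g e1 [s [e [d [ws hd [-> _]]]]].
  by rewrite subgroupM ?(Wdom _ _ ws) ?subgroup_derived.
Qed.

Let derived_W0D d : derived H d -> W0D (d, 0).
Proof. by have [W01 _ _ _ _] := homW0; exists 1, 0, d; rewrite mul1g. Qed.

Let W0_sub_W0D : W0 `<=` W0D.
Proof.
by move=> [s e] ws; exists s, e, 1; split => //; [apply: gen_one | rewrite mulg1].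
Qed.

(* Zorn is applied to the sets X with [X `|` W0D] a partial homomorphism,
   so that the empty chain has an upper bound. *)
Let P (X : set (G * D)) := partial_hom H (X `|` W0D).

Let P_bigcup F : F `<=` P -> total_on F subset -> P (\bigcup_(X in F) X).
Proof.
move=> FP Ftot; set U := \bigcup_(X in F) X.
have two_in_member p q : (U `|` W0D) p -> (U `|` W0D) q ->
    exists Y, [/\ P Y, Y `|` W0D `<=` U `|` W0D, (Y `|` W0D) p & (Y `|` W0D) q].
  have sub Y : F Y -> Y `|` W0D `<=` U `|` W0D.
    by move=> FY z [Yz | Wz]; [left; exists Y | right].
  have P0 : P set0 by rewrite /P set0U; exact: partial_hom_W0D.
  have sub0 : set0 `|` W0D `<=` U `|` W0D by rewrite set0U => z; right.
  case=> [[X FX Xp] | Wp]; case=> [[Y FY Yq] | Wq].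
  - have [XY | YX] := Ftot _ _ FX FY.
      by exists Y; split; [exact: FP | exact: sub | left; exact: XY | left].
    by exists X; split; [exact: FP | exact: sub | left | left; exact: YX].
  - by exists X; split; [exact: FP | exact: sub | left | right].
  - by exists Y; split; [exact: FP | exact: sub | right | left].
  - by exists set0; split; [exact: P0 | exact: sub0 | right | right].
split.
- by right; apply/derived_W0D/gen_one.
- move=> g d1 d2 /two_in_member h /h [Y [[_ Yfun _ _ _] _ p1 p2]]; exact: Yfun p1 p2.
- move=> g1 g2 d1 d2 /two_in_member h /h [Y [[_ _ Ymul _ _] sY p1 p2]].
  by apply/sY/Ymul.
- move=> g d /[dup] /two_in_member h /h [Y [[_ _ _ Yinv _] sY p _]].
  by apply/sY/Yinv.
- move=> g d /[dup] /two_in_member h /h [Y [[_ _ _ _ Ydom] _ p _]]; exact: Ydom p.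
Qed.

Lemma partial_hom_extend : exists alpha : G -> D,
  additive_on H alpha /\ forall s e, W0 (s, e) -> alpha s = e.
Proof.
have [A [PA maxA]] := Zorn_bigcup P_bigcup.
set W := A `|` W0D.
have [_ Wfun Wmul _ _] := PA.
have total h : h \in H -> exists e, W (h, e).
  move=> hH; apply: contrapT => noh.
  have derivedW d : derived H d -> W (d, 0) by right; apply: derived_W0D.
  have [W' [homW' AW' [e W'h]]] := partial_hom_extend_to subH divD PA derivedW hH.
  apply: (maxA W'); last by rewrite /P setUidl // => z W0Dz; apply: AW'; right.
  split; first by move=> z Az; apply: AW'; left.
  by move=> W'A; apply: noh; exists e; left; apply: W'A.
have [alpha alphaP] : {alpha : G -> D & forall g e, W (g, e) -> alpha g = e}.
  apply: (@choice _ _ (fun g a => forall e, W (g, e) -> a = e)) => g.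
  have [[a wa] | noW] := pselect (exists a, W (g, a)).
    by exists a => e; apply: Wfun.
  by exists 0 => e we; case: noW; exists e.
exists alpha; split.
- move=> g1 g2 /total [e1 w1] /total [e2 w2].
  by rewrite (alphaP _ _ w1) (alphaP _ _ w2); apply/alphaP/Wmul.
- by move=> s e ws; apply/alphaP; right; apply: W0_sub_W0D.
Qed.

End ExtendToSubgroup.

Lemma hom_extend (G : groupType) (D : zmodType) (H S : {pred G}) (chi : G -> D) :
  is_subgroup H -> is_subgroup S -> {subset S <= H} -> divisible D ->
  additive_on S chi -> (forall s, s \in S -> derived H s -> chi s = 0) ->
  exists alpha : G -> D, additive_on H alpha /\ {in S, alpha =1 chi}.
Proof.
move=> subH subS sSH divD chiM chi_derived.
pose W0 p := p.1 \in S /\ p.2 = chi p.1.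
have homW0 : partial_hom H W0.
  rewrite /W0; split => /=.
  - by rewrite subgroup1 ?(additive_on1 (subgroup1 subS) chiM).
  - by move=> g d1 d2 [_ ->] [_ ->].
  - by move=> g1 g2 d1 d2 [S1 ->] [S2 ->]; rewrite subgroupM ?chiM.
  - by move=> g d [Sg ->]; rewrite subgroupV ?(additive_onV subS chiM).
  - by move=> g d [/sSH].
have W0_derived d e : derived H d -> W0 (d, e) -> e = 0.
  by move=> dH' [dS /= ->]; apply: chi_derived.
have [alpha [alphaM alphaW0]] := partial_hom_extend subH divD homW0 W0_derived.
by exists alpha; split => // s sS; apply: alphaW0.
Qed.

Section CentralProduct.
Variables (G : groupType) (H K : {pred G}) (D : zmodType).
Hypotheses (subH : is_subgroup H) (subK : is_subgroup K).
Hypothesis HK_gen : forall g, exists h k, [/\ h \in H, k \in K & g = h * k].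
Hypothesis cHK : forall h k, h \in H -> k \in K -> commute h k.

Section SymmetricCocycle.
Variable f : G -> G -> D.
Hypothesis f_cocycle : cocycle_on predT f.
Hypothesis fH : {in H &, forall h h', f h h' = 0}.
Hypothesis fK : {in K &, forall k k', f k k' = 0}.
Hypothesis f_sym : {in H & K, forall h k, f h k = f k h}.

Let cocycleE x y z : f x y + f (x * y) z = f y z + f x (y * z).
Proof.
move/eqP: (@f_cocycle x y z isT isT isT); rewrite subr_eq0 => /eqP <-.
by rewrite addrAC subrK.
Qed.

Lemma cocycle_mulg_eq h k h' k' : h \in H -> k \in K -> h' \in H -> k' \in K ->
  h * k = h' * k' -> f h k = f h' k'.
Proof.
move=> hH kK h'H k'K ehk.
have ez : h^-1 * h' = k * k'^-1 by rewrite (canRL (mulgK _) (esym ehk)) -mulgA mulKg.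
have zH : h^-1 * h' \in H by rewrite subgroupM ?subgroupV.
have zK : h^-1 * h' \in K by rewrite ez subgroupM ?subgroupV.
have := cocycleE h (h^-1 * h') k'.
rewrite (fH hH zH) (fK zK k'K) !add0r mulVKg ez mulgVK.
by move=> ->.
Qed.

Lemma cocycle_central_split h1 k1 h2 k2 :
  h1 \in H -> k1 \in K -> h2 \in H -> k2 \in K ->
  f (h1 * k1) (h2 * k2) = f (h1 * h2) (k1 * k2) - f h1 k1 - f h2 k2.
Proof.
move=> h1H k1K h2H k2K.
have e1 := cocycleE h1 k1 (h2 * k2).
have e2 := cocycleE h1 h2 (k1 * k2); rewrite (fH h1H h2H) add0r in e2.
have e3 : f h2 k2 + f k1 (h2 * k2) = f h2 (k1 * k2).
  have := cocycleE h2 k1 k2; rewrite (fK k1K k2K) add0r => <-.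
  by rewrite -cocycleE -(f_sym h2H k1K) (cHK h2H k1K).
have kh : k1 * (h2 * k2) = h2 * (k1 * k2) by rewrite mulgA -(cHK h2H k1K) -mulgA.
apply: (addrI (f h1 k1)); rewrite e1 e2 -e3 kh !addrA.
by rewrite [RHS](ACl ((1*5)*(2*6)*3*4)) /= !subrr !add0r.
Qed.

Lemma symmetric_cocycle_cobound : exists c, forall x y, f x y = cobound c x y.
Proof.
have [hh /choice [kk hkP]] := choice HK_gen.
pose c g := - f (hh g) (kk g).
have cE h k : h \in H -> k \in K -> c (h * k) = - f h k.
  move=> hH kK; have [hH' kK' ehk] := hkP (h * k).
  by rewrite /c (cocycle_mulg_eq hH' kK' hH kK (esym ehk)).
exists c => x y.
have [h1 [k1 [h1H k1K ->]]] := HK_gen x; have [h2 [k2 [h2H k2K ->]]] := HK_gen y.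
rewrite /cobound; have -> : h1 * k1 * (h2 * k2) = h1 * h2 * (k1 * k2).
  by rewrite !mulgA -(mulgA h1) -(cHK h2H k1K) mulgA.
rewrite !cE ?subgroupM // cocycle_central_split // opprK.
by rewrite [RHS](ACl (2*3*1)).
Qed.

End SymmetricCocycle.

Hypothesis trivHK' : forall x, derived H x -> derived K x -> x = 1.
Hypothesis divD : divisible D.

Let Z := [predI H & K].
Let subZ : is_subgroup Z := subgroupI subH subK.

Let memZ x : x \in Z = (x \in H) && (x \in K).
Proof. by rewrite inE. Qed.

Let cZ z z' : z \in Z -> z' \in Z -> commute z z'.
Proof. by rewrite !memZ => /andP[zH _] /andP[_ z'K]; apply: cHK. Qed.

(* Since H' and K' meet trivially, [p * q |-> phi q] is a well-defined
   homomorphism on (Z :&: H') * (Z :&: K'), which extends to the abelian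
   group Z. *)
Lemma hom_split (phi : G -> D) : additive_on Z phi ->
  exists psi : G -> D, [/\ additive_on Z psi,
    (forall p, p \in Z -> derived H p -> psi p = 0)
  & (forall q, q \in Z -> derived K q -> psi q = phi q)].
Proof.
move=> phiM; have phi1 := additive_on1 (subgroup1 subZ) phiM.
pose W0 r := exists p q, [/\ p \in Z, derived H p, q \in Z, derived K q
  & r = (p * q, phi q)].
have homW0 : partial_hom Z W0.
  split.
  - by exists 1, 1; split; rewrite ?subgroup1 ?mulg1 ?phi1 //; apply: gen_one.
  - move=> g e1 e2 [p [q [pZ pH qZ qK [-> ->]]]].
    move=> [p' [q' [p'Z p'H q'Z q'K [epq ->]]]].
    have epq' : p'^-1 * p = q' * q^-1.
      by rewrite (canRL (mulgK _) epq) -mulgA mulKg.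
    suff /divg1_eq -> : q' * q^-1 = 1 by [].
    apply: trivHK'; first by rewrite -epq'; apply: gen_mul (gen_inv p'H) pH.
    by apply: gen_mul q'K (gen_inv qK).
  - move=> g1 g2 e1 e2 [p [q [pZ pH qZ qK [-> ->]]]].
    move=> [p' [q' [p'Z p'H q'Z q'K [-> ->]]]].
    exists (p * p'), (q * q'); split; rewrite ?subgroupM //; try exact: gen_mul.
    by rewrite -phiM // !mulgA -(mulgA p) (cZ qZ p'Z) mulgA.
  - move=> g e [p [q [pZ pH qZ qK [-> ->]]]].
    exists p^-1, q^-1; split; rewrite ?subgroupV //; try exact: gen_inv.
    rewrite invgM (cZ (subgroupV subZ qZ) (subgroupV subZ pZ)).
    by rewrite (additive_onV subZ phiM).
  - by move=> g e [p [q [pZ _ qZ _ [-> _]]]]; rewrite subgroupM.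
have W0_derived d e : derived Z d -> W0 (d, e) -> e = 0.
  move=> /(derived_abelian cZ) ->; have [W01 W0fun _ _ _] := homW0.
  by move/W0fun; apply.
have [psi [psiM psiW0]] := partial_hom_extend subZ divD homW0 W0_derived.
exists psi; split => // [p pZ pH | q qZ qK].
- rewrite -[p]mulg1 -phi1; apply: psiW0; exists p, 1.
  by split; rewrite ?subgroup1 //; apply: gen_one.
- rewrite -{1}[q]mul1g; apply: psiW0; exists 1, q.
  by split; rewrite ?subgroup1 //; apply: gen_one.
Qed.

Lemma cobound_of_restrictions (f : G -> G -> D) (a b : G -> D) :
  cocycle_on predT f ->
  {in H &, forall x y, f x y = cobound a x y} ->
  {in K &, forall x y, f x y = cobound b x y} ->
  {in H & K, forall h k, f h k = f k h} ->
  exists c, forall x y, f x y = cobound c x y.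
Proof.
move=> f_cocycle fH fK f_sym.
have phiM : additive_on Z (a \- b).
  apply: additive_on_cobound_eq => x y.
  rewrite !memZ => /andP[xH xK] /andP[yH yK].
  by rewrite -fH -?fK.
have [psi [psiM psi_H' psi_K']] := hom_split phiM.
have sZH : {subset Z <= H} by move=> z; rewrite memZ => /andP[].
have sZK : {subset Z <= K} by move=> z; rewrite memZ => /andP[].
have [al [alM alZ]] := hom_extend subH subZ sZH divD psiM psi_H'.
have [be [beM beZ]] :
    exists be, additive_on K be /\ {in Z, be =1 (a \- b) \- psi}.
  apply: hom_extend => //; first exact: additive_onB.
  by move=> q qZ qK; rewrite /= psi_K' // subrr.
pose e g := if g \in H then (a \- al) g else (b \+ be) g.
have eH : {in H, e =1 a \- al} by move=> h hH; rewrite /e hH.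
have eK : {in K, e =1 b \+ be}.
  move=> k kK; rewrite /e; case: ifP => // kH.
  have kZ : k \in Z by rewrite memZ kH.
  by rewrite /= alZ // beZ //= [RHS]addrC addrAC subrK.
have [c fc] : exists c, forall x y, f x y - cobound e x y = cobound c x y.
  apply: symmetric_cocycle_cobound.
  - exact: cocycleB f_cocycle (cocycle_cobound e).
  - move=> h h' hH h'H.
    rewrite fH // (eq_in_cobound subH eH) // coboundB.
    by rewrite (cobound_additive alM) // subr0 subrr.
  - move=> k k' kK k'K.
    rewrite fK // (eq_in_cobound subK eK) // coboundD.
    by rewrite (cobound_additive beM) // addr0 subrr.
  - by move=> h k hH kK; rewrite f_sym // (cobound_commute e (cHK hH kK)).
by exists (c \+ e) => x y; rewrite coboundD -fc subrK.
Qed.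

End CentralProduct.

Theorem corollary3p4 (G : groupType) (H K : {pred G}) (D : zmodType) :
  is_normal H -> is_normal K ->
  (forall g : G, exists h k, [/\ h \in H, k \in K & g = monoid.mul h k]) ->
  (forall h k, h \in H -> k \in K -> monoid.commute h k) ->
  (forall x : G, derived H x -> derived K x -> x = @monoid.one G) ->
  divisible D ->
  forall f1 f2 : G -> G -> D,
    cocycle_on predT f1 -> cocycle_on predT f2 ->
    cohomologous_on H f1 f2 ->
    cohomologous_on K f1 f2 ->
    (forall h k, h \in H -> k \in K -> nu f1 h k = nu f2 h k) ->
    cohomologous_on predT f1 f2.
Proof.
(* Normality is automatic here, since G = HK and [H, K] = 1. *)
move=> [subH _] [subK _] HK_gen cHK trivHK' divD f1 f2 f1c f2c [a fa] [b fb] nu12.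
have f_sym : {in H & K, forall h k, f1 h k - f2 h k = f1 k h - f2 k h}.
  move=> h k hH kK; move/eqP: (nu12 h k hH kK); rewrite /nu subr_eq => /eqP ->.
  by rewrite [LHS](ACl ((1*4)*3*2)) /= subrr add0r.
have [c fc] := cobound_of_restrictions subH subK HK_gen cHK trivHK' divD
  (cocycleB f1c f2c) fa fb f_sym.
by exists c => x y _ _; apply: fc.
Qed.
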